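(* Let $G$ and $H$ be countable discrete groups equipped with proper left-invariant metrics. If $G$ and $H$ have finite APC-decomposition complexity, then the wreath product $H\wr G$ (with a proper left-invariant metric) has finite APC-decomposition complexity.
   Context: $H\wr G=H^{(G)}\rtimes G$, where $H^{(G)}$ is the group of finitely supported functions $G\to H$ and $G$ acts by translation. Every countable group carries a proper left-invariant metric, unique up to coarse equivalence. A family $\mathcal{U}$ of metric subspaces of $(X,d)$ is $r$-disjoint if $d(x,y)>r$ whenever $x\in U$, $y\in U'$, $U\neq U'$ in $\mathcal{U}$. For families $\mathcal{X},\mathcal{Y}$ and $R\in\mathbb{R}^{\mathbb{N}}$, $\mathcal{X}\xrightarrow{R}\mathcal{Y}$ means: there is an integer $k$ such that for each $X\in\mathcal{X}$ there are subcollections $\mathcal{U}_1,\dots,\mathcal{U}_k\subseteq\mathcal{Y}$ of subspaces of $X$, each $\mathcal{U}_i$ being $R_i$-disjoint, with $\bigcup_i\mathcal{U}_i$ covering $X$. A family is bounded if the diameters of its members are uniformly bounded. $\mathfrak{C}_0$ is the class of bounded families; for an ordinal $\alpha>0$, $\mathfrak{C}_\alpha$ is the class of families $\mathcal{X}$ such that for every $R\in\mathbb{R}^{\mathbb{N}}$ there exist $\beta<\alpha$ and $\mathcal{Y}\in\mathfrak{C}_\beta$ with $\mathcal{X}\xrightarrow{R}\mathcal{Y}$. A metric space has finite APC-decomposition complexity if it is a member of some family belonging to $\mathfrak{C}_\alpha$ for some ordinal $\alpha$. *)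

From Stdlib Require Import Reals List.
Open Scope R_scope.
Set Implicit Arguments.

Record Group := {
  gcar :> Type;
  gmul : gcar -> gcar -> gcar;
  gone : gcar;
  ginv : gcar -> gcar;
  gassoc : forall x y z, gmul x (gmul y z) = gmul (gmul x y) z;
  gmul1l : forall x, gmul gone x = x;
  gmul1r : forall x, gmul x gone = x;
  gmulVl : forall x, gmul (ginv x) x = gone;
  gmulVr : forall x, gmul x (ginv x) = gone
}.

Definition countable_type (T : Type) : Prop :=
  exists f : T -> nat, forall x y, f x = f y -> x = y.

Definition is_metric {M : Type} (d : M -> M -> R) : Prop :=
  (forall x, d x x = 0) /\
  (forall x y, d x y = 0 -> x = y) /\
  (forall x y, d x y = d y x) /\
  (forall x y z, d x z <= d x y + d y z).

(** proper: closed balls are finite (the space is discrete) *)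
Definition proper_metric {M : Type} (d : M -> M -> R) : Prop :=
  forall x (r : R), exists l : list M, forall y, d x y <= r -> In y l.

Definition left_invariant {M : Type} (mul : M -> M -> M) (d : M -> M -> R) : Prop :=
  forall g x y, d (mul g x) (mul g y) = d x y.

Definition proper_left_invariant_metric {G : Group} (d : G -> G -> R) : Prop :=
  is_metric d /\ proper_metric d /\ left_invariant (@gmul G) d.

(** * Wreath product H wr G = H^(G) x| G *)
Definition finsupp (H G : Group) : Type :=
  { f : G -> H | exists l : list G, forall x, ~ In x l -> f x = gone H }.

Lemma finsupp_mul_proof (H G : Group) (f f' : finsupp H G) (g : G) :
  exists l : list G, forall x, ~ In x l ->
    gmul H (proj1_sig f x) (proj1_sig f' (gmul G (ginv G g) x)) = gone H.
Proof.
  destruct f as [f [l1 H1]], f' as [f' [l2 H2]]; simpl.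
  exists (l1 ++ map (gmul G g) l2). intros x Hx.
  rewrite H1, H2, gmul1l; auto.
  - intro Hin. apply Hx. apply in_or_app. right.
    replace x with (gmul G g (gmul G (ginv G g) x)).
    + apply in_map; exact Hin.
    + rewrite gassoc, gmulVr, gmul1l; reflexivity.
  - intro Hin. apply Hx. apply in_or_app. left. exact Hin.
Qed.

Definition wreath_car (H G : Group) : Type := (finsupp H G * G)%type.

(** (f,g)(f',g') = (f * (g . f'), g g'), where (g . f')(x) = f'(g^-1 x) *)
Definition wreath_mul (H G : Group) (a b : wreath_car H G) : wreath_car H G :=
  let (f, g) := a in let (f', g') := b in
  (exist _ (fun x => gmul H (proj1_sig f x) (proj1_sig f' (gmul G (ginv G g) x)))
         (finsupp_mul_proof f f' g),
   gmul G g g').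

Definition wreath_proper_left_invariant_metric {H G : Group}
  (d : wreath_car H G -> wreath_car H G -> R) : Prop :=
  is_metric d /\ proper_metric d /\ left_invariant (@wreath_mul H G) d.

(** A family of metric subspaces of (M,d): a collection of subsets of M. *)
Definition family (M : Type) := (M -> Prop) -> Prop.

Definition r_disjoint {M : Type} (d : M -> M -> R) (r : R) (U : family M) : Prop :=
  forall A B x y, U A -> U B -> A <> B -> A x -> B y -> d x y > r.

Definition bounded_family {M : Type} (d : M -> M -> R) (X : family M) : Prop :=
  exists b : R, forall A, X A -> forall x y, A x -> A y -> d x y <= b.

(** X --R--> Y (indices i = 1..k use R_i) *)
Definition decomposes {M : Type} (d : M -> M -> R) (Rs : nat -> R)
  (Xf Yf : family M) : Prop :=
  exists k : nat, forall X, Xf X ->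
    exists U : nat -> family M,
      (forall i, (1 <= i <= k)%nat ->
         (forall A, U i A -> Yf A /\ (forall x, A x -> X x)) /\
         r_disjoint d (Rs i) (U i)) /\
      (forall x, X x -> exists i A, (1 <= i <= k)%nat /\ U i A /\ A x).

(** The classes C_alpha, for alpha ranging in a well-ordered type (T, lt):
    C_alpha = bounded families if alpha is the least element (alpha = 0),
    otherwise families X such that for every R there are beta < alpha and
    Y in C_beta with X --R--> Y. *)
Inductive inC {M : Type} (d : M -> M -> R) {T : Type} (lt : T -> T -> Prop)
  : T -> family M -> Prop :=
| inC_zero : forall a X, (forall b, ~ lt b a) -> bounded_family d X -> inC d lt a X
| inC_step : forall a X,
    (forall Rs : nat -> R, exists b Y, lt b a /\ inC d lt b Y /\ decomposes d Rs X Y) ->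
    inC d lt a X.

Definition strict_well_order {T : Type} (lt : T -> T -> Prop) : Prop :=
  well_founded lt /\
  (forall a b c, lt a b -> lt b c -> lt a c) /\
  (forall a b, lt a b \/ a = b \/ lt b a).

(** (M,d) has finite APC-decomposition complexity: it is a member of some
    family in C_alpha for some ordinal alpha (ordinals = strict well-orders). *)
Definition finite_APC {M : Type} (d : M -> M -> R) : Prop :=
  exists (T : Type) (lt : T -> T -> Prop) (a : T) (X : family M),
    strict_well_order lt /\ inC d lt a X /\ X (fun _ => True).

(** The projection [snd : H wr G -> G] is uniformly expansive, so by the fibering
    theorem for decomposition complexity it is enough to bound, uniformly, the
    complexity of preimages of bounded subsets of [G].  At a scale [R], elements within
    distance [R] of each other have lamp configurations that differ only on a translate
    [snd x * F_R] of one finite set; so the preimage of an [r]-ball around [g0] splits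
    [R]-disjointly according to the lamps outside a finite window [g0 * F], and each piece
    is, after a left translation and up to bounded error, a set of configurations
    supported in [F].  Configurations supported in [x :: L] fibre over those supported in
    [L] by erasing the lamp at [x], with fibres coarsely equivalent to [H]; by induction
    on [L] they have complexity at most [T_H * |L| + a_H]. *)

From Stdlib Require Import Reals List Lra Lia Setoid ClassicalEpsilon IndefiniteDescription
  FunctionalExtensionality PropExtensionality ProofIrrelevance
  Relation_Operators Disjoint_Union Lexicographic_Product.
Open Scope R_scope.

(** * Decomposition complexity *)

Lemma decomposes_refl {M} (d : M -> M -> R) Rs (X : family M) : decomposes d Rs X X.
Proof.
  exists 1%nat. intros S HS. exists (fun _ A => A = S). split.
  - intros i _. split.
    + intros A ->. auto.
    + intros A B x y -> -> Hne. contradiction.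
  - intros x Hx. exists 1%nat, S. auto.
Qed.

Lemma decomposes_pullback {M M'} (d : M -> M -> R) (d' : M' -> M' -> R) (sigma : R -> R)
  Rs (X Y : family M) (X' Y' : family M') :
  decomposes d (fun i => sigma (Rs i)) X Y ->
  (forall S', X' S' -> exists S (c : M' -> M), X S /\ (forall x, S' x -> S (c x)) /\
     (forall x y t, S' x -> S' y -> d' x y <= t -> d (c x) (c y) <= sigma t) /\
     (forall A, Y A -> Y' (fun x => S' x /\ A (c x)))) ->
  decomposes d' Rs X' Y'.
Proof.
  intros [k HD] Hpull. exists k. intros S' HS'.
  destruct (Hpull S' HS') as (S & c & HS & Hc & Hsigma & HY').
  destruct (HD S HS) as (U & HU & Hcover).
  exists (fun i P => exists A, U i A /\ P = (fun x => S' x /\ A (c x))). split.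
  - intros i Hi. destruct (HU i Hi) as [HUY Hdisj]. split.
    + intros P (A & HA & ->). split; [apply HY', HUY, HA | now intros x []].
    + intros P1 P2 x y (A1 & HA1 & ->) (A2 & HA2 & ->) Hne [Sx Ax] [Sy Ay].
      assert (HA : A1 <> A2) by (intros ->; contradiction).
      pose proof (Hdisj A1 A2 (c x) (c y) HA1 HA2 HA Ax Ay).
      apply Rnot_le_lt. intros Hxy. specialize (Hsigma x y (Rs i) Sx Sy Hxy). lra.
  - intros x Sx. destruct (Hcover (c x) (Hc x Sx)) as (i & A & Hi & HA & Ax).
    exists i, (fun z => S' z /\ A (c z)). split; [exact Hi | split; [now exists A | auto]].
Qed.

Lemma decomposes_into_classes {M} (d : M -> M -> R) Rs (X Y : family M) :
  (forall S, X S -> exists E : M -> M -> Prop, Equivalence E /\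
     (forall x y, S x -> S y -> d x y <= Rs 1%nat -> E x y) /\
     (forall w0, Y (fun w => S w /\ E w w0))) ->
  decomposes d Rs X Y.
Proof.
  intros Hclasses. exists 1%nat. intros S HS.
  destruct (Hclasses S HS) as (E & HE & Hclose & HY).
  exists (fun _ P => exists w0, P = (fun w => S w /\ E w w0)). split.
  - intros i Hi. replace i with 1%nat by lia. split.
    + intros P [w0 ->]. split; [apply HY | now intros w []].
    + intros P1 P2 x y [w1 ->] [w2 ->] Hne [Sx Ex] [Sy Ey].
      apply Rnot_le_lt. intros Hxy. apply Hne.
      assert (E12 : E w1 w2).
      { transitivity x; [now symmetry|]. transitivity y; auto. }
      apply functional_extensionality. intros w. apply propositional_extensionality.
      split; intros [Sw Ew]; split; auto.
      * transitivity w1; auto.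
      * transitivity w2; auto. now symmetry.
  - intros w Sw. exists 1%nat, (fun z => S z /\ E z w). repeat split; auto.
    + now exists w.
    + reflexivity.
Qed.

Definition coarse_embedding {M M'} (d : M -> M -> R) (d' : M' -> M' -> R)
  (rho sigma : R -> R) (S' : M' -> Prop) (c : M' -> M) : Prop :=
  (forall x y t, S' x -> S' y -> d (c x) (c y) <= t -> d' x y <= rho t) /\
  (forall x y t, S' x -> S' y -> d' x y <= t -> d (c x) (c y) <= sigma t).

Definition coarse_preimages {M M'} (d : M -> M -> R) (d' : M' -> M' -> R)
  (rho sigma : R -> R) (X : family M) : family M' :=
  fun S' => exists S c, X S /\ (forall x, S' x -> S (c x)) /\
    coarse_embedding d d' rho sigma S' c.

Definition preimages {M M'} (D : M -> Prop) (p : M -> M') (A : family M') : family M :=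
  fun S => exists B, A B /\ forall x, S x -> D x /\ B (p x).

Section Complexity.

Context {T : Type} (lt : T -> T -> Prop).
Hypothesis lt_wf : well_founded lt.

Lemma inC_bounded {M} (d : M -> M -> R) a X : bounded_family d X -> inC d lt a X.
Proof.
  intros HX. induction a as [a IH] using (well_founded_ind lt_wf).
  destruct (classic (exists b, lt b a)) as [[b Hb] | Hmin].
  - apply inC_step. intros Rs. exists b, X. auto using decomposes_refl.
  - apply inC_zero; auto. intros b Hb. eauto.
Qed.

Lemma inC_lt {M} (d : M -> M -> R) a c X :
  (forall a b c, lt a b -> lt b c -> lt a c) -> lt a c -> inC d lt a X -> inC d lt c X.
Proof.
  intros lt_trans Hac HX. inversion HX as [? ? _ HXb | ? ? Hstep]; subst.
  - now apply inC_bounded.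
  - apply inC_step. intros Rs. destruct (Hstep Rs) as (b & Y & Hb & HY & HD).
    exists b, Y. eauto.
Qed.

Lemma inC_order_embedding {M} (d : M -> M -> R) {T'} (lt' : T' -> T' -> Prop) (e : T' -> T) :
  well_founded lt' -> (forall x y, lt' x y -> lt (e x) (e y)) ->
  forall b X, inC d lt' b X -> inC d lt (e b) X.
Proof.
  intros lt'_wf He b. induction b as [b IH] using (well_founded_ind lt'_wf).
  intros X HX. inversion HX as [? ? _ HXb | ? ? Hstep]; subst.
  - now apply inC_bounded.
  - apply inC_step. intros Rs. destruct (Hstep Rs) as (b' & Y & Hb' & HY & HD).
    exists (e b'), Y. auto.
Qed.

Lemma inC_coarse_pullback {M M'} (d : M -> M -> R) (d' : M' -> M' -> R) rho sigma :
  forall a X (X' : family M'), inC d lt a X ->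
  (forall S', X' S' -> coarse_preimages d d' rho sigma X S') -> inC d' lt a X'.
Proof.
  intros a. induction a as [a IH] using (well_founded_ind lt_wf).
  intros X X' HX HX'. inversion HX as [? ? Hmin [r Hr] | ? ? Hstep]; subst.
  - apply inC_zero; auto. exists (rho r).
    intros S' HS' x y Sx Sy. destruct (HX' S' HS') as (S & c & HS & Hc & Hrho & _).
    apply (Hrho x y r Sx Sy), (Hr S HS); auto.
  - apply inC_step. intros Rs.
    destruct (Hstep (fun i => sigma (Rs i))) as (b & Y & Hb & HY & HD).
    exists b, (coarse_preimages d d' rho sigma Y).
    split; [exact Hb | split; [apply (IH b Hb Y); auto |]].
    apply (decomposes_pullback d d' sigma Rs X Y _ _ HD).
    intros S' HS'. destruct (HX' S' HS') as (S & c & HS & Hc & Hrho & Hsigma).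
    exists S, c. repeat split; auto.
    intros A HA. exists A, c. repeat split; auto; [now intros x [] | |];
      intros x y t [Sx _] [Sy _]; auto.
Qed.

Lemma inC_subfamily {M} (d : M -> M -> R) a (X X' : family M) :
  inC d lt a X -> (forall S', X' S' -> exists S, X S /\ forall x, S' x -> S x) ->
  inC d lt a X'.
Proof.
  intros HX Hsub. apply (inC_coarse_pullback d d (fun t => t) (fun t => t) a X X' HX).
  intros S' HS'. destruct (Hsub S' HS') as (S & HS & HS'S).
  exists S, (fun x => x). repeat split; auto.
Qed.

Lemma inC_full {M} (d : M -> M -> R) a (X : family M) :
  inC d lt a X -> X (fun _ => True) -> inC d lt a (fun _ => True).
Proof.
  intros HX Hfull. apply (inC_subfamily d a X _ HX). intros S' _. now exists (fun _ => True).
Qed.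

Lemma inC_fibration {M M'} (d : M -> M -> R) (d' : M' -> M' -> R) (D : M -> Prop)
  (p : M -> M') (sigma : R -> R) {T'} (lt' : T' -> T' -> Prop) (phi : T' -> T) :
  well_founded lt' -> (forall x y, lt' x y -> lt (phi x) (phi y)) ->
  (forall x y t, D x -> D y -> d x y <= t -> d' (p x) (p y) <= sigma t) ->
  (forall a A, bounded_family d' A -> inC d lt (phi a) (preimages D p A)) ->
  forall a A, inC d' lt' a A -> inC d lt (phi a) (preimages D p A).
Proof.
  intros lt'_wf Hphi Hp Hfibers a. induction a as [a IH] using (well_founded_ind lt'_wf).
  intros A HA. inversion HA as [? ? _ HAb | ? ? Hstep]; subst; [auto|].
  apply inC_step. intros Rs.
  destruct (Hstep (fun i => sigma (Rs i))) as (a' & Y & Ha' & HY & HD).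
  exists (phi a'), (preimages D p Y). split; [auto | split; [auto |]].
  apply (decomposes_pullback d' d sigma Rs A Y _ _ HD).
  intros S (B & HB & HS). exists B, p. repeat split; auto.
  - intros x Sx. apply HS, Sx.
  - intros x y t Sx Sy. apply Hp; [apply HS, Sx | apply HS, Sy].
  - intros A' HA'. exists A'. split; [exact HA'|]. intros x [Sx A'x]. split; auto. apply HS, Sx.
Qed.

End Complexity.

(** * Well-orders *)

Lemma nat_strict_well_order : strict_well_order Peano.lt.
Proof. split; [exact Wf_nat.lt_wf | split; intros; lia]. Qed.

Lemma slexprod_strict_well_order {A B} (ltA : A -> A -> Prop) (ltB : B -> B -> Prop) :
  strict_well_order ltA -> strict_well_order ltB ->
  strict_well_order (slexprod A B ltA ltB).
Proof.
  intros (wfA & trA & triA) (wfB & trB & triB). split; [now apply wf_slexprod | split].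
  - intros x y z Hxy Hyz.
    destruct Hxy; inversion Hyz; subst; eauto using left_slex, right_slex.
  - intros [a b] [a' b'].
    destruct (triA a a') as [Ha | [<- | Ha]]; [left; now left | | right; right; now left].
    destruct (triB b b') as [Hb | [<- | Hb]]; [left; now right | auto | right; right; now right].
Qed.

Lemma le_AsB_strict_well_order {A B} (ltA : A -> A -> Prop) (ltB : B -> B -> Prop) :
  strict_well_order ltA -> strict_well_order ltB ->
  strict_well_order (le_AsB A B ltA ltB).
Proof.
  intros (wfA & trA & triA) (wfB & trB & triB). split; [now apply wf_disjoint_sum | split].
  - intros x y z Hxy Hyz.
    destruct Hxy; inversion Hyz; subst; eauto using le_aa, le_ab, le_bb.
  - intros [a | b] [a' | b'].
    + destruct (triA a a') as [Ha | [<- | Ha]]; auto using le_aa.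
    + left; constructor.
    + right; right; constructor.
    + destruct (triB b b') as [Hb | [<- | Hb]]; auto using le_bb.
Qed.

(* The ordinal [T_H * omega + T_G]: [inl (n, h)] stands for [T_H * n + h]. *)
Definition wreath_order_lt {TH TG : Type} (ltH : TH -> TH -> Prop) (ltG : TG -> TG -> Prop) :
  (nat * TH) + TG -> (nat * TH) + TG -> Prop :=
  le_AsB (nat * TH) TG (slexprod nat TH Peano.lt ltH) ltG.

Lemma wreath_order_strict_well_order {TH TG} (ltH : TH -> TH -> Prop) (ltG : TG -> TG -> Prop) :
  strict_well_order ltH -> strict_well_order ltG -> strict_well_order (wreath_order_lt ltH ltG).
Proof.
  intros ltH_swo ltG_swo. apply le_AsB_strict_well_order; [| exact ltG_swo].
  exact (slexprod_strict_well_order _ _ nat_strict_well_order ltH_swo).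
Qed.

Definition next_level {TH TG : Type} (x : (nat * TH) + TG) : (nat * TH) + TG :=
  match x with inl (m, h) => inl (S m, h) | inr g => inr g end.

Lemma next_level_monotone {TH TG} (ltH : TH -> TH -> Prop) (ltG : TG -> TG -> Prop) x y :
  wreath_order_lt ltH ltG x y -> wreath_order_lt ltH ltG (next_level x) (next_level y).
Proof.
  intros Hxy. destruct Hxy as [[m h] [m' h'] Hlex | [m h] g | g g' Hg]; simpl; constructor; auto.
  inversion Hlex; subst; [apply left_slex; lia | now apply right_slex].
Qed.

Lemma level_zero_lt_next_level {TH TG} (ltH : TH -> TH -> Prop) (ltG : TG -> TG -> Prop) h x :
  wreath_order_lt ltH ltG (inl (0%nat, h)) (next_level x).
Proof. destruct x as [[m h'] | g]; constructor. apply left_slex. lia. Qed.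

(** * Groups and left-invariant metrics *)

Section GroupFacts.

Context {G : Group}.

Lemma gmulKg (a b : G) : gmul G (ginv G a) (gmul G a b) = b.
Proof. now rewrite gassoc, gmulVl, gmul1l. Qed.

Lemma gmulKVg (a b : G) : gmul G a (gmul G (ginv G a) b) = b.
Proof. now rewrite gassoc, gmulVr, gmul1l. Qed.

Lemma ginvK (a : G) : ginv G (ginv G a) = a.
Proof. now rewrite <- (gmul1r G (ginv G (ginv G a))), <- (gmulVl G a), gassoc, gmulVl, gmul1l. Qed.

Lemma ginv1 : ginv G (gone G) = gone G.
Proof. now rewrite <- (gmul1r G (ginv G (gone G))), gmulVl. Qed.

Lemma ginv_mul_eq1 (a b : G) : gmul G (ginv G a) b = gone G -> a = b.
Proof. intros E. now rewrite <- (gmulKVg a b), E, gmul1r. Qed.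

End GroupFacts.

Lemma list_upper_bound {A} (F : A -> R) (l : list A) : exists m, forall z, In z l -> F z <= m.
Proof.
  induction l as [|a l [m Hm]]; [exists 0; intros z [] |].
  exists (Rmax (F a) m). intros z [<- | Hz]; [apply Rmax_l |].
  apply Rle_trans with m; [now apply Hm | apply Rmax_r].
Qed.

Lemma proper_ball_bound {M} (d : M -> M -> R) (c : M) (F : M -> R) :
  proper_metric d -> exists s : R -> R, forall t z, d c z <= t -> F z <= s t.
Proof.
  intros Hproper. apply (functional_choice (fun t m => forall z, d c z <= t -> F z <= m)).
  intros t. destruct (Hproper c t) as [l Hl]. destruct (list_upper_bound F l) as [m Hm].
  exists m. auto.
Qed.

Section LeftInvariantDistance.

Context {M : Type} (mul : M -> M -> M) (inv : M -> M) (e : M) (d : M -> M -> R).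
Hypothesis d_linv : left_invariant mul d.

Lemma dist_to_one : (forall a, mul (inv a) a = e) -> forall a b, d a b = d e (mul (inv a) b).
Proof. intros mulVa a b. now rewrite <- (d_linv (inv a) a b), mulVa. Qed.

Lemma dist_mul_r : (forall a, mul a e = a) -> forall a b, d a (mul a b) = d e b.
Proof. intros mula1 a b. now rewrite <- (d_linv a e b), mula1. Qed.

End LeftInvariantDistance.

Lemma coarse_embedding_near_isometry {M} (d : M -> M -> R) (S : M -> Prop) (f c : M -> M) s :
  is_metric d -> (forall x y, d (f x) (f y) = d x y) -> (forall x, S x -> d (f x) (c x) <= s) ->
  coarse_embedding d d (fun t => t + 2 * s) (fun t => t + 2 * s) S c.
Proof.
  intros (_ & _ & Hsym & Htri) Hf Hfc.
  split; intros x y t Sx Sy Ht; pose proof (Hfc x Sx); pose proof (Hfc y Sy).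
  - rewrite <- Hf. pose proof (Htri (f x) (c x) (f y)). pose proof (Htri (c x) (c y) (f y)).
    rewrite (Hsym (c y) (f y)) in *. lra.
  - rewrite <- Hf in Ht. pose proof (Htri (c x) (f x) (c y)). pose proof (Htri (f x) (f y) (c y)).
    rewrite (Hsym (c x) (f x)) in *. lra.
Qed.

(** * The wreath product *)

Section WreathAlgebra.

Context {G H : Group}.

Definition lamp (w : wreath_car H G) (v : G) : H := proj1_sig (fst w) v.

Lemma lamp_mul (w w' : wreath_car H G) v :
  lamp (wreath_mul w w') v = gmul H (lamp w v) (lamp w' (gmul G (ginv G (snd w)) v)).
Proof. now destruct w, w'. Qed.

Lemma wreath_ext (w w' : wreath_car H G) :
  (forall v, lamp w v = lamp w' v) -> snd w = snd w' -> w = w'.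
Proof.
  destruct w as [[f f_fin] g], w' as [[f' f'_fin] g']. unfold lamp. simpl.
  intros Hf <-. assert (f = f') as <- by now apply functional_extensionality.
  now rewrite (proof_irrelevance _ f_fin f'_fin).
Qed.

Lemma finsupp_one_finite : exists l : list G, forall x, ~ In x l -> gone H = gone H.
Proof. now exists nil. Qed.

Definition wone : wreath_car H G :=
  (exist _ (fun _ => gone H) finsupp_one_finite, gone G).

Lemma finsupp_update_finite (f : finsupp H G) (x : G) (h : H) :
  exists l : list G, forall v, ~ In v l ->
    (if excluded_middle_informative (v = x) then h else proj1_sig f v) = gone H.
Proof.
  destruct f as [f [l Hl]]. exists (x :: l). intros v Hv. simpl.
  destruct (excluded_middle_informative (v = x)) as [-> | _].
  - contradiction Hv. now left.
  - apply Hl. intros Hin. apply Hv. now right.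
Qed.

Definition finsupp_update (f : finsupp H G) (x : G) (h : H) : finsupp H G :=
  exist _ (fun v => if excluded_middle_informative (v = x) then h else proj1_sig f v)
    (finsupp_update_finite f x h).

Definition erase (x : G) (w : wreath_car H G) : wreath_car H G :=
  (finsupp_update (fst w) x (gone H), snd w).

Lemma lamp_erase (x : G) (w : wreath_car H G) v :
  lamp (erase x w) v = if excluded_middle_informative (v = x) then gone H else lamp w v.
Proof. reflexivity. Qed.

Lemma snd_erase (x : G) (w : wreath_car H G) : snd (erase x w) = snd w.
Proof. reflexivity. Qed.

Definition single (x : G) (h : H) : wreath_car H G :=
  (finsupp_update (fst wone) x h, gone G).

Lemma winv_finite (f : finsupp H G) (g : G) :
  exists l : list G, forall v, ~ In v l -> ginv H (proj1_sig f (gmul G g v)) = gone H.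
Proof.
  destruct f as [f [l Hl]]. exists (map (gmul G (ginv G g)) l). intros v Hv. simpl.
  rewrite Hl; [apply ginv1 |]. intros Hin. apply Hv.
  rewrite <- (gmulKg g v). now apply in_map.
Qed.

Definition winv (w : wreath_car H G) : wreath_car H G :=
  (exist _ (fun v => ginv H (proj1_sig (fst w) (gmul G (snd w) v))) (winv_finite (fst w) (snd w)),
   ginv G (snd w)).

Lemma lamp_winv_mul (w w' : wreath_car H G) v :
  lamp (wreath_mul (winv w) w') v =
  gmul H (ginv H (lamp w (gmul G (snd w) v))) (lamp w' (gmul G (snd w) v)).
Proof. destruct w, w'. unfold lamp. simpl. now rewrite ginvK. Qed.

Lemma snd_winv_mul (w w' : wreath_car H G) :
  snd (wreath_mul (winv w) w') = gmul G (ginv G (snd w)) (snd w').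
Proof. now destruct w, w'. Qed.

Lemma wreath_mulVw (w : wreath_car H G) : wreath_mul (winv w) w = wone.
Proof.
  apply wreath_ext; [intros v | rewrite snd_winv_mul; apply gmulVl].
  rewrite lamp_winv_mul. apply gmulVl.
Qed.

Lemma wreath_mulw1 (w : wreath_car H G) : wreath_mul w wone = w.
Proof. destruct w. apply wreath_ext; [intros v; apply gmul1r | apply gmul1r]. Qed.

Lemma wreath_mul_untranslate (a : finsupp H G) (u : G) :
  wreath_mul (a, u) (fst wone, ginv G u) = (a, gone G).
Proof. apply wreath_ext; [intros v; apply gmul1r | apply gmulVr]. Qed.

Lemma erase_single_decomp (x : G) (z : wreath_car H G) :
  snd z = gone G -> z = wreath_mul (erase x z) (single x (lamp z x)).
Proof.
  intros Hz. apply wreath_ext; [intros v | symmetry; apply gmul1r].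
  rewrite lamp_mul. unfold erase. simpl snd. rewrite Hz, ginv1, gmul1l.
  unfold lamp. simpl.
  destruct (excluded_middle_informative (v = x)) as [-> | _].
  - now rewrite gmul1l.
  - now rewrite gmul1r.
Qed.

Lemma erase_winv_mul (x : G) (w w' : wreath_car H G) :
  snd w = gone G -> snd w' = gone G ->
  erase x (wreath_mul (winv w) w') = wreath_mul (winv (erase x w)) (erase x w').
Proof.
  intros Hw Hw'. apply wreath_ext; [intros v | exact (snd_winv_mul w w')].
  rewrite lamp_erase, !lamp_winv_mul, snd_erase, Hw, gmul1l, !lamp_erase.
  destruct (excluded_middle_informative (v = x)); [now rewrite ginv1, gmul1l | reflexivity].
Qed.

End WreathAlgebra.

Section WreathGeometry.

Context {G H : Group} (dG : G -> G -> R) (dH : H -> H -> R)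
  (d : wreath_car H G -> wreath_car H G -> R).
Hypotheses (dG_proper : proper_metric dG) (dG_linv : left_invariant (gmul G) dG).
Hypotheses (dH_proper : proper_metric dH) (dH_linv : left_invariant (gmul H) dH).
Hypotheses (d_metric : is_metric d) (d_proper : proper_metric d)
  (d_linv : left_invariant (@wreath_mul H G) d).

Lemma dG_to_one a b : dG a b = dG (gone G) (gmul G (ginv G a) b).
Proof. exact (dist_to_one _ _ _ dG dG_linv (gmulVl G) a b). Qed.

Lemma dH_to_one a b : dH a b = dH (gone H) (gmul H (ginv H a) b).
Proof. exact (dist_to_one _ _ _ dH dH_linv (gmulVl H) a b). Qed.

Lemma d_to_one w w' : d w w' = d wone (wreath_mul (winv w) w').
Proof. exact (dist_to_one _ _ _ d d_linv wreath_mulVw w w'). Qed.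

Lemma d_mul_r w z : d w (wreath_mul w z) = d wone z.
Proof. exact (dist_mul_r _ _ d d_linv wreath_mulw1 w z). Qed.

Definition supported_in (L : list G) (w : wreath_car H G) : Prop :=
  snd w = gone G /\ forall v, ~ In v L -> lamp w v = gone H.

Definition supported_family (L : list G) : family (wreath_car H G) :=
  fun S => forall w, S w -> supported_in L w.

Lemma supported_family_nil_bounded : bounded_family d (supported_family nil).
Proof.
  assert (Hone : forall z, supported_in nil z -> z = wone).
  { intros z [Hz Hlamp]. apply wreath_ext; [intros v; now apply Hlamp | exact Hz]. }
  destruct d_metric as [Hd0 _].
  exists 0. intros S HS w w' Sw Sw'. rewrite (Hone w), (Hone w'), Hd0 by auto. lra.
Qed.

Lemma erase_supported x L w : supported_in (x :: L) w -> supported_in L (erase x w).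
Proof.
  intros [Hw Hlamp]. split; [exact Hw |]. intros v Hv. rewrite lamp_erase.
  destruct (excluded_middle_informative (v = x)) as [_ | Hvx]; [reflexivity |].
  apply Hlamp. intros [-> | Hin]; auto.
Qed.

Lemma lamp_winv_mul_base (w w' : wreath_car H G) v : snd w = gone G ->
  lamp (wreath_mul (winv w) w') v = gmul H (ginv H (lamp w v)) (lamp w' v).
Proof. intros Hw. now rewrite lamp_winv_mul, Hw, gmul1l. Qed.

Lemma erase_expansive x : exists s : R -> R, forall w w' t,
  snd w = gone G -> snd w' = gone G -> d w w' <= t -> d (erase x w) (erase x w') <= s t.
Proof.
  destruct (proper_ball_bound d wone (fun z => d wone (erase x z)) d_proper) as [s Hs].
  exists s. intros w w' t Hw Hw' Ht.
  rewrite d_to_one, <- erase_winv_mul by assumption. apply Hs. now rewrite <- d_to_one.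
Qed.

Lemma erase_fibers_embed x L A : bounded_family d A -> exists rho sigma,
  forall S, preimages (supported_in (x :: L)) (erase x) A S ->
  coarse_preimages dH d rho sigma (fun _ => True) S.
Proof.
  intros [r Hr].
  destruct (proper_ball_bound dH (gone H) (fun h => d wone (single x h)) dH_proper) as [psi Hpsi].
  destruct (proper_ball_bound d wone (fun z => dH (gone H) (lamp z x)) d_proper) as [s Hs].
  exists (fun t => r + psi t), s. intros S (B & HB & HS).
  exists (fun _ => True), (fun w => lamp w x). split; [exact I | split; [auto | split]].
  - intros w w' t Sw Sw' Ht.
    destruct (HS w Sw) as [[Hw _] Bw], (HS w' Sw') as [[Hw' _] Bw'].
    assert (Hz : snd (wreath_mul (winv w) w') = gone G)
      by now rewrite snd_winv_mul, Hw, Hw', ginv1, gmul1l.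
    rewrite d_to_one, (erase_single_decomp x _ Hz).
    destruct d_metric as (_ & _ & _ & Htri).
    eapply Rle_trans; [apply (Htri _ (erase x (wreath_mul (winv w) w'))) | apply Rplus_le_compat].
    + rewrite erase_winv_mul, <- d_to_one by assumption. now apply (Hr B).
    + rewrite d_mul_r. apply Hpsi. now rewrite lamp_winv_mul_base, <- dH_to_one.
  - intros w w' t Sw Sw' Ht. destruct (HS w Sw) as [[Hw _] _].
    rewrite dH_to_one, <- lamp_winv_mul_base by assumption. apply Hs. now rewrite <- d_to_one.
Qed.

Definition agree_outside (g0 : G) (F : list G) (w w' : wreath_car H G) : Prop :=
  forall v, ~ In (gmul G (ginv G g0) v) F -> lamp w v = lamp w' v.

Lemma agree_outside_equivalence g0 F : Equivalence (agree_outside g0 F).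
Proof.
  split; [intros w v _; reflexivity | intros w w' E v Hv; symmetry; auto |].
  intros w w' w'' E E' v Hv. transitivity (lamp w' v); auto.
Qed.

Lemma close_elements_agree R0 : exists FR : list G,
  forall x y, d x y <= R0 -> agree_outside (snd x) FR x y.
Proof.
  destruct (d_proper wone R0) as [ball Hball].
  assert (Hsupp : exists FR, forall z, In z ball -> forall u, ~ In u FR -> lamp z u = gone H).
  { clear Hball. induction ball as [| z ball [FR HFR]]; [now exists nil |].
    destruct (proj2_sig (fst z)) as [lz Hlz]. exists (lz ++ FR).
    intros z' [<- | Hz'] u Hu; [apply Hlz | apply HFR]; auto;
      intros Hin; apply Hu, in_or_app; auto. }
  destruct Hsupp as [FR HFR]. exists FR. intros x y Hxy v Hv.
  apply ginv_mul_eq1. rewrite <- (gmulKVg (snd x) v), <- lamp_winv_mul.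
  apply HFR; [apply Hball; now rewrite <- d_to_one | exact Hv].
Qed.

Lemma agree_outside_widen r (Br FR : list G) g0 g (x y : wreath_car H G) :
  (forall b, dG (gone G) b <= r -> In b Br) -> dG g0 g <= r -> agree_outside g FR x y ->
  agree_outside g0 (flat_map (fun b => map (gmul G b) FR) Br) x y.
Proof.
  intros HBr Hg Hagree v Hv. apply Hagree. intros Hin. apply Hv.
  apply in_flat_map. exists (gmul G (ginv G g0) g).
  split; [apply HBr; now rewrite <- dG_to_one |].
  replace (gmul G (ginv G g0) v) with (gmul G (gmul G (ginv G g0) g) (gmul G (ginv G g) v))
    by now rewrite <- gassoc, gmulKVg.
  now apply in_map.
Qed.

Definition window_pieces (r : R) (F : list G) : family (wreath_car H G) :=
  fun P => exists g0 w0, forall w, P w -> dG g0 (snd w) <= r /\ agree_outside g0 F w w0.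

Definition over_balls (r : R) : family (wreath_car H G) :=
  fun S => exists g0, forall w, S w -> dG g0 (snd w) <= r.

Lemma over_balls_decompose r Rs : exists F,
  decomposes d Rs (over_balls r) (window_pieces r F).
Proof.
  destruct (close_elements_agree (Rs 1%nat)) as [FR HFR].
  destruct (dG_proper (gone G) r) as [Br HBr].
  exists (flat_map (fun b => map (gmul G b) FR) Br).
  apply decomposes_into_classes. intros S [g0 HS].
  exists (agree_outside g0 (flat_map (fun b => map (gmul G b) FR) Br)).
  split; [apply agree_outside_equivalence | split].
  - intros x y Sx Sy Hxy. apply (agree_outside_widen r Br FR g0 (snd x)); auto.
  - intros w0. exists g0, w0. intros w [Sw Hw]. auto.
Qed.

Lemma window_pieces_embed r F : exists s, forall P, window_pieces r F P ->
  coarse_preimages d d (fun t => t + 2 * s) (fun t => t + 2 * s) (supported_family F) P.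
Proof.
  destruct (proper_ball_bound dG (gone G) (fun u => d wone (fst wone, ginv G u)) dG_proper)
    as [s Hs].
  exists (s r). intros P (g0 & w0 & HP).
  (* Translating by [tr] clears the lamps outside [F] and brings [snd] into the [r]-ball
     around [1]; [c] then forgets this bounded [G]-coordinate. *)
  pose (tr := (fst w0, g0) : wreath_car H G).
  pose (c := fun w => (fst (wreath_mul (winv tr) w), gone G) : wreath_car H G).
  exists (supported_in F), c. split; [now intros S | split].
  - intros w Pw. split; [reflexivity |]. intros u Hu. destruct (HP w Pw) as [_ Hagree].
    change (lamp (wreath_mul (winv tr) w) u = gone H).
    rewrite lamp_winv_mul. change (snd tr) with g0.
    rewrite (Hagree (gmul G g0 u)); [apply gmulVl | now rewrite gmulKg].
  - apply (coarse_embedding_near_isometry d P (wreath_mul (winv tr)) c);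
      [exact d_metric | apply d_linv |].
    intros w Pw. unfold c.
    rewrite <- (wreath_mul_untranslate _ (snd (wreath_mul (winv tr) w))),
      <- surjective_pairing, d_mul_r.
    apply Hs. rewrite snd_winv_mul, <- dG_to_one. apply (HP w Pw).
Qed.

Context {TH TG : Type} (ltH : TH -> TH -> Prop) (ltG : TG -> TG -> Prop).
Hypotheses (ltH_swo : strict_well_order ltH) (ltG_swo : strict_well_order ltG).
Context (aH : TH).
Hypothesis H_in_C : inC dH ltH aH (fun _ => True).

Local Notation ord := (wreath_order_lt ltH ltG).

Lemma ord_wf : well_founded ord.
Proof. now destruct (wreath_order_strict_well_order ltH ltG ltH_swo ltG_swo). Qed.

Lemma ord_trans : forall a b c, ord a b -> ord b c -> ord a c.
Proof.
  now destruct (wreath_order_strict_well_order ltH ltG ltH_swo ltG_swo) as (_ & ? & _).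
Qed.

Lemma H_in_C_level_zero : inC dH ord (inl (0%nat, aH)) (fun _ => True).
Proof.
  apply (inC_order_embedding ord ord_wf dH ltH (fun h => inl (0%nat, h)));
    [apply ltH_swo | | exact H_in_C].
  intros h h' Hh. constructor. now apply right_slex.
Qed.

Lemma supported_family_in_C L : inC d ord (inl (length L, aH)) (supported_family L).
Proof.
  induction L as [| x L IH].
  - apply (inC_bounded ord ord_wf), supported_family_nil_bounded.
  - destruct (erase_expansive x) as [s Hs].
    pose (fibred := preimages (supported_in (x :: L)) (erase x) (supported_family L)).
    assert (Hfibred : inC d ord (next_level (inl (length L, aH))) fibred).
    { apply (inC_fibration ord d d _ (erase x) s ord next_level ord_wf
               (next_level_monotone ltH ltG)); [| | exact IH].
      - intros w w' t [Hw _] [Hw' _]. now apply Hs.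
      - intros a A HA. apply (inC_lt ord ord_wf d (inl (0%nat, aH)));
          [apply ord_trans | apply level_zero_lt_next_level |].
        destruct (erase_fibers_embed x L A HA) as (rho & sigma & Hembed).
        exact (inC_coarse_pullback ord ord_wf dH d rho sigma _ _ _ H_in_C_level_zero Hembed). }
    apply (inC_subfamily ord ord_wf d _ _ _ Hfibred).
    intros S HS. exists S. split; [| auto]. exists (supported_in L). split; [now intros w |].
    intros w Sw. split; [now apply HS | now apply erase_supported, HS].
Qed.

Lemma over_balls_in_C r g : inC d ord (inr g) (over_balls r).
Proof.
  apply inC_step. intros Rs. destruct (over_balls_decompose r Rs) as [F HF].
  destruct (window_pieces_embed r F) as [s Hs].
  exists (inl (length F, aH)), (window_pieces r F). split; [constructor | split; [| exact HF]].
  exact (inC_coarse_pullback ord ord_wf d d _ _ _ _ _ (supported_family_in_C F) Hs).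
Qed.

Lemma wreath_in_C aG : inC dG ltG aG (fun _ => True) -> inC d ord (inr aG) (fun _ => True).
Proof.
  intros G_in_C.
  destruct (proper_ball_bound d wone (fun w => dG (gone G) (snd w)) d_proper) as [s Hs].
  apply (inC_subfamily ord ord_wf d _ (preimages (fun _ => True) snd (fun _ => True))).
  - apply (inC_fibration ord d dG (fun _ => True) snd s ltG inr);
      [apply ltG_swo | now constructor | | | exact G_in_C].
    + intros w w' t _ _ Ht. rewrite dG_to_one, <- snd_winv_mul. apply Hs. now rewrite <- d_to_one.
    + intros g A [r Hr]. apply (inC_subfamily ord ord_wf d _ _ _ (over_balls_in_C r g)).
      intros S (B & HB & HS). exists S. split; [| auto].
      destruct (classic (exists g0, B g0)) as [[g0 Bg0] | Hempty].
      * exists g0. intros w Sw. apply (Hr B HB); [exact Bg0 | apply HS, Sw].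
      * exists (gone G). intros w Sw. contradiction Hempty. exists (snd w). apply HS, Sw.
  - intros S' _. exists S'. split; [| auto]. exists (fun _ => True). split; auto.
Qed.

End WreathGeometry.

Theorem theorem4p11 (G H : Group)
  (dG : G -> G -> R) (dH : H -> H -> R) :
  countable_type G -> countable_type H ->
  proper_left_invariant_metric dG -> proper_left_invariant_metric dH ->
  finite_APC dG -> finite_APC dH ->
  forall d : wreath_car H G -> wreath_car H G -> R,
    wreath_proper_left_invariant_metric d -> finite_APC d.
Proof.
  intros _ _ (_ & dG_proper & dG_linv) (_ & dH_proper & dH_linv)
    (TG & ltG & aG & XG & ltG_swo & G_in_C & XG_full)
    (TH & ltH & aH & XH & ltH_swo & H_in_C & XH_full) d (d_metric & d_proper & d_linv).
  exists ((nat * TH) + TG)%type, (wreath_order_lt ltH ltG), (inr aG), (fun _ => True).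
  split; [now apply wreath_order_strict_well_order | split; [| exact I]].
  apply (wreath_in_C dG dH d dG_proper dG_linv dH_proper dH_linv d_metric d_proper d_linv
           ltH ltG ltH_swo ltG_swo aH).
  - apply (inC_full ltH (proj1 ltH_swo) dH aH XH H_in_C XH_full).
  - apply (inC_full ltG (proj1 ltG_swo) dG aG XG G_in_C XG_full).
Qed.
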